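(* Let $\ell$ be an even positive integer and $w$ an $\ell$-perfect word over $\{0,1\}$. Then there exists an $\ell$-perfect word $z$ over $\{0,1\}$ of length $2|w|$ such that $\mathrm{even}(z)=w$.
   Context: For a finite word $z=a_1\cdots a_m$, $\mathrm{even}(z)=a_2a_4\cdots$. For words $w,u$, $|w|^{al}_u=|\{i: w[i..i+|u|-1]=u,\ i\equiv1\bmod|u|\}|$. A finite binary word $w$ is $\ell$-perfect if $|w|$ is a multiple of $\ell$ and every word $u$ of length $\ell$ satisfies $|w|^{al}_u=|w|/(\ell2^\ell)$. *)

From mathcomp Require Import all_boot.
Set Implicit Arguments. Unset Strict Implicit. Unset Printing Implicit Defensive.

(* Finite binary words are bit sequences; positions are 0-based here. *)
Definition word := seq bool.

(* even(a_1 ... a_m) = a_2 a_4 ... : 1-based even positions = 0-based odd positions *)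
Definition even_word (z : word) : word :=
  [seq nth false z i | i <- iota 0 (size z) & odd i].

Definition factor (w : word) (i n : nat) : word := take n (drop i w).

(* |w|^{al}_u : number of 1-based i with i = 1 mod |u| and w[i..i+|u|-1] = u,
   i.e. 0-based starting positions i = k*|u| where the occurrence fits in w. *)
Definition aligned_count (w u : word) : nat :=
  count (fun i => (i %% size u == 0) && (i + size u <= size w) &&
                  (factor w i (size u) == u))
        (iota 0 (size w)).

(* l-perfect: l | |w| and every u of length l has |w|^{al}_u = |w|/(l 2^l)
   (the equality stated multiplicatively, so no truncating division). *)
Definition perfect (l : nat) (w : word) : Prop :=
  (l %| size w) /\
  forall u : word, size u = l -> aligned_count w u * (l * 2 ^ l) = size w.

From mathcomp Require Import all_boot.
From mathcomp Require Import zify.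

Set Implicit Arguments.
Unset Strict Implicit.
Unset Printing Implicit Defensive.

(* Write l = 2m and cut w into blocks of length l.  A block x ++ y with
   |x| = |y| = m is replaced by the two blocks interleave y x and
   interleave x y, whose even parts are x and y, so even(z) = w.  Every word
   of length l is interleave e o for unique halves e, o, and it occurs among
   the new blocks once per block o ++ e and once per block e ++ o of w; as
   both counts are |w| / (l 2^l), its aligned count in z is |z| / (l 2^l). *)

Lemma aligned_count_cat (b w u : word) : 0 < size u -> size b = size u ->
  aligned_count (b ++ w) u = (b == u) + aligned_count w u.
Proof.
move=> u_gt0 bu; rewrite /aligned_count size_cat iotaD count_cat bu.
congr (_ + _).
  rewrite -(prednK u_gt0) /= (prednK u_gt0) add0n -bu leq_addr /=.
  rewrite /factor drop0 take_size_cat // (eq_in_count (a2 := pred0)).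
    by rewrite count_pred0 addn0.
  move=> i; rewrite mem_iota => /andP[i_gt0 i_lt] /=.
  by rewrite modn_small; [case: i i_gt0 i_lt | lia].
rewrite add0n -[size u]addn0 iotaDl count_map addn0.
apply: eq_count => i /=.
rewrite modnDl -addnA leq_add2l /factor [size u + i]addnC -drop_drop -bu.
by rewrite drop_size_cat.
Qed.

Lemma aligned_count_flatten (u : word) (bs : seq word) : 0 < size u ->
  all (fun b => size b == size u) bs ->
  aligned_count (flatten bs) u = count_mem u bs.
Proof.
move=> u_gt0; elim: bs => [|b bs IHbs] //= /andP[/eqP bu /IHbs <-].
by rewrite aligned_count_cat.
Qed.

Lemma size_flatten_uniform (n : nat) (bs : seq word) :
  all (fun b => size b == n) bs -> size (flatten bs) = n * size bs.
Proof.
rewrite -(all_map size (pred1 n)) => /all_pred1P shape_bs.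
by rewrite size_flatten /shape shape_bs sumn_nseq size_map mulnC.
Qed.

Lemma flatten_uniform_blocks (l : nat) (w : word) : l %| size w ->
  exists2 bs : seq word, all (fun b => size b == l) bs & w = flatten bs.
Proof.
move=> l_dvd; set sh := nseq (size w %/ l) l.
have sum_sh : sumn sh = size w by rewrite sumn_nseq mulnC divnK.
exists (reshape sh w); last by rewrite reshapeKr ?sum_sh.
by rewrite -(all_map size (pred1 l)) -/(shape _) reshapeKl ?sum_sh ?all_pred1_nseq.
Qed.

Lemma perfect_flattenE (l : nat) (bs : seq word) : 0 < l ->
  all (fun b => size b == l) bs ->
  perfect l (flatten bs) <->
  (forall u : word, size u = l -> count_mem u bs * 2 ^ l = size bs).
Proof.
move=> l_gt0 bs_l; rewrite /perfect (size_flatten_uniform bs_l) dvdn_mulr //.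
have countE u : size u = l -> aligned_count (flatten bs) u = count_mem u bs.
  by move=> ul; apply: aligned_count_flatten; rewrite ul.
split=> [[_ perfect_bs] u ul | count_bs]; last first.
  by split=> // u ul; rewrite countE // mulnCA count_bs.
by apply/eqP; rewrite -(eqn_pmul2l l_gt0) mulnCA -countE // perfect_bs.
Qed.

Fixpoint interleave (a c : word) : word :=
  if (a, c) is (x :: a', y :: c') then x :: y :: interleave a' c' else [::].

Lemma size_interleave (a c : word) : size a = size c ->
  size (interleave a c) = (size a).*2.
Proof. by elim: a c => [|x a IHa] [|y c] //= [/IHa ->]. Qed.

Lemma eq_interleave (a c e o : word) :
  size a = size c -> size e = size o -> size a = size e ->
  (interleave a c == interleave e o) = (a == e) && (c == o).
Proof.
elim: a c e o => [|x a IHa] [|y c] [|x' e] [|y' o] //= [ac] [eo] [ae].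
by rewrite !eqseq_cons IHa // !andbA; congr (_ && _); rewrite andbAC.
Qed.

Lemma interleave_halves (m : nat) (u : word) : size u = m.*2 ->
  exists e o : word, [/\ size e = m, size o = m & u = interleave e o].
Proof.
elim: m u => [|m IHm] [|x [|y t]] //=; first by exists [::], [::].
rewrite doubleS => -[/IHm [e [o [em om ->]]]].
by exists (x :: e), (y :: o); rewrite /= em om.
Qed.

Lemma even_word_cons2 (x y : bool) (t : word) :
  even_word (x :: y :: t) = y :: even_word t.
Proof.
rewrite /even_word /= -[2]/(2 + 0) iotaDl filter_map -map_comp /=.
by congr (_ :: map _ _); apply: eq_filter => i /=; rewrite negbK.
Qed.

Lemma even_word_interleave_cat (a c t : word) : size a = size c ->
  even_word (interleave a c ++ t) = c ++ even_word t.
Proof.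
elim: a c => [|x a IHa] [|y c] //= [ac].
by rewrite even_word_cons2 IHa.
Qed.

Lemma eq_cat_halves (m : nat) (b x y : word) : m <= size b -> size x = m ->
  (b == x ++ y) = (take m b == x) && (drop m b == y).
Proof.
by move=> mb xm; rewrite -{1}(cat_take_drop m b) eqseq_cat // xm size_takel.
Qed.

Section LiftBlocks.

Variable m : nat.

Definition lift_block (b : word) : seq word :=
  [:: interleave (drop m b) (take m b); interleave (take m b) (drop m b)].

Definition lift_blocks (bs : seq word) : seq word :=
  flatten (map lift_block bs).

Lemma size_lift_blocks (bs : seq word) : size (lift_blocks bs) = 2 * size bs.
Proof. by elim: bs => //= b bs IHbs; rewrite IHbs mulnS. Qed.

Lemma size_halves (b : word) : size b = m.*2 ->
  size (take m b) = m /\ size (drop m b) = m.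
Proof. by move=> bm; rewrite size_drop size_takel bm; lia. Qed.

Lemma lift_blocks_uniform (bs : seq word) :
  all (fun b => size b == m.*2) bs ->
  all (fun b => size b == m.*2) (lift_blocks bs).
Proof.
elim: bs => //= b bs IHbs /andP[/eqP /size_halves [tm dm] /IHbs ->].
by rewrite !size_interleave ?tm ?dm ?eqxx.
Qed.

Lemma even_word_lift_blocks (bs : seq word) :
  all (fun b => size b == m.*2) bs ->
  even_word (flatten (lift_blocks bs)) = flatten bs.
Proof.
elim: bs => //= b bs IHbs /andP[/eqP /size_halves [tm dm] /IHbs <-].
by rewrite !even_word_interleave_cat ?tm ?dm // catA cat_take_drop.
Qed.

Lemma count_lift_blocks (bs : seq word) (e o : word) :
  size e = m -> size o = m -> all (fun b => size b == m.*2) bs ->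
  count_mem (interleave e o) (lift_blocks bs) =
  count_mem (o ++ e) bs + count_mem (e ++ o) bs.
Proof.
move=> em om; elim: bs => //= b bs IHbs /andP[/eqP bm /IHbs ->].
have [tm dm] := size_halves bm.
have mb : m <= size b by rewrite bm -addnn leq_addr.
rewrite !eq_interleave ?tm ?dm ?em ?om //.
rewrite !(eq_cat_halves _ mb em, eq_cat_halves _ mb om).
by rewrite [_ && (drop m b == e)]andbC; lia.
Qed.

End LiftBlocks.

Theorem corollary11 (l : nat) (w : word) :
  0 < l -> ~~ odd l -> perfect l w ->
  exists z : word, perfect l z /\ size z = 2 * size w /\ even_word z = w.
Proof.
move=> l_gt0 l_even w_perfect; set m := l./2.
have l_double : l = m.*2 by rewrite -[LHS]odd_double_half (negbTE l_even).
have [bs bs_l w_bs] := flatten_uniform_blocks (proj1 w_perfect).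
move: w_perfect; rewrite w_bs perfect_flattenE // => bs_count.
rewrite l_double in bs_l.
have lift_l : all (fun b => size b == l) (lift_blocks m bs).
  by rewrite l_double lift_blocks_uniform.
exists (flatten (lift_blocks m bs)); split; [|split].
- rewrite perfect_flattenE // => u.
  rewrite {1}l_double => /interleave_halves [e [o [em om ->]]].
  rewrite count_lift_blocks // mulnDl !bs_count ?size_cat ?em ?om ?addnn //.
  by rewrite size_lift_blocks mul2n.
- rewrite (size_flatten_uniform lift_l) (size_flatten_uniform bs_l).
  by rewrite size_lift_blocks -l_double mulnCA.
- exact: even_word_lift_blocks bs_l.
Qed.
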